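(* Let $G$ be a graph belonging to one of the seven types of the FC catalog. If $G$ is neither $K_4$ nor a (full) $n$-wheel with $n$ even, then the chromatic number of $G$ is at most $3$. The graph $K_4$ and the $n$-wheels with $n$ even are 4-chromatic.
   Context: All graphs are finite and simple. A plane graph is a graph with a fixed crossing-free drawing in the plane. Two plane graphs are regarded as the same if one is carried to the other by a homeomorphism of the sphere. The size of a face is the number of vertices on its boundary walk, counted with multiplicity. A plane graph is called outerplanar if some single face has all of its vertices on its boundary. The n-wheel ($n\ge 4$) consists of a cycle (the rim) on $n-1$ vertices together with a center vertex drawn inside the rim and joined to every rim vertex by an edge (a radius); the 4-wheel is $K_4$. $\kappa$ denotes vertex connectivity. The FC catalog consists of the following seven types of plane graphs. Type 1: Start from the 3-prism: two disjoint triangles $x_1x_2x_3$ and $y_1y_2y_3$ plus the edges $x_iy_i$, drawn with one triangle inside the other. Replace each edge $x_iy_i$ by a path with $a_i\ge 0$ internal vertices. Type 2: Start from $K_4$ drawn with a vertex $c$ inside the triangle $t_1t_2t_3$. Replace each edge $ct_i$ by a path with $a_i\ge 1$ internal vertices. Type 3: Two vertices $\alpha_0,\alpha_1$ joined by three internally disjoint paths, each having at least two internal vertices. Type 4: An $n$-wheel with $n\ge 4$ from which some (possibly no) radii are deleted, such that the resulting plane graph is not outerplanar. Type 5: A cycle together with a (possibly empty) set of pairwise noncrossing chords, all drawn on the same side of the cycle. Type 6: $K_1$, or a connected outerplanar plane graph with $\kappa=1$; this includes $K_2$ and graphs with a cut vertex. Type 7: A disconnected outerplanar plane graph. *)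

From mathcomp Require Import all_boot.
Set Implicit Arguments. Unset Strict Implicit. Unset Printing Implicit Defensive.

Record sgraph (V : finType) := SGraph {
  adj : rel V;
  adj_sym : symmetric adj;
  adj_irr : irreflexive adj }.

Section Graphs.
Variable V : finType.
Implicit Type G : sgraph V.

Definition colorableb G (k : nat) : bool :=
  [exists c : {ffun V -> 'I_k},
     [forall x, [forall y, adj G x y ==> (c x != c y)]]].

Lemma colorable_exists G : exists k, colorableb G k.
Proof.
exists #|V|; apply/existsP; exists [ffun x => enum_rank x].
apply/forallP=> x; apply/forallP=> y; apply/implyP=> Hxy.
rewrite !ffunE; apply/negP=> /eqP/enum_rank_inj Exy.
by rewrite Exy (adj_irr G) in Hxy.
Qed.

Definition chromatic_number G : nat := ex_minn (colorable_exists G).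

Definition connected_in G (S : {set V}) : Prop :=
  forall x y, x \in S -> y \in S ->
    connect [rel u v | [&& adj G u v, u \in S & v \in S]] x y.

Definition connected G : Prop := connected_in G setT.

Definition k_connected G (k : nat) : Prop :=
  k < #|V| /\ forall X : {set V}, #|X| < k -> connected_in G (~: X).

Definition vertex_connectivity_is G (k : nat) : Prop :=
  k_connected G k /\ ~ k_connected G k.+1.

(* The vertices can be placed in convex position (cyclic order f) so that
   the edges, drawn as chords, are pairwise non-crossing. *)
Definition outerplanar G : Prop :=
  exists f : 'I_#|V| -> V, bijective f /\
    forall a b c d : 'I_#|V|, a < b -> b < c -> c < d ->
      ~~ (adj G (f a) (f c) && adj G (f b) (f d)).

Definition pedge (p : seq V) (x y : V) : bool :=
  has (fun q => (q == (x, y)) || (q == (y, x))) (zip p (behead p)).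

Definition path_from_to (p : seq V) (x y : V) : Prop :=
  [/\ uniq p, 2 <= size p, head x p = x & last x p = y].

Definition is_end (p : seq V) (x : V) : bool :=
  (p != [::]) && ((x == head x p) || (x == last x p)).

Definition union_of_paths G (ps : seq (seq V)) : Prop :=
  [/\ forall x y, adj G x y = has (fun p => pedge p x y) ps,
      forall v, has (fun p => v \in p) ps &
      forall i j, i < j -> j < size ps -> forall x,
        x \in nth [::] ps i -> x \in nth [::] ps j ->
        is_end (nth [::] ps i) x && is_end (nth [::] ps j) x].

(* rim vertices Some i, i : 'I_m (rim cycle i -- i+1 mod m), center None,
   radii kept: those to rim vertices in R *)
Definition wheel_adj (m : nat) (R : {set 'I_m}) : rel (option 'I_m) :=
  fun u w => match u, w with
  | Some i, Some j => (val j == (val i).+1 %% m) || (val i == (val j).+1 %% m)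
  | None, Some j => j \in R
  | Some i, None => i \in R
  | None, None => false
  end.

Definition iso_to_wheel G (m : nat) (R : {set 'I_m}) : Prop :=
  exists f : V -> option 'I_m, bijective f /\
    forall x y, adj G x y = wheel_adj R (f x) (f y).

(* the n-wheel (n >= 4): rim on n-1 vertices, all radii present *)
Definition is_wheel G (n : nat) : Prop :=
  4 <= n /\ iso_to_wheel G [set: 'I_n.-1].

Definition is_K4 G : Prop :=
  #|V| = 4 /\ forall x y, x != y -> adj G x y.

End Graphs.

(* Faces of the standard drawing of the wheel with radii set R (center inside
   the rim).  The outer face has only the rim vertices on its boundary.
   If R is empty, the single inner face has all vertices on its boundary.
   Otherwise the inner faces correspond to the radii r in R: the face
   following radius r (in the cyclic rim order) has on its boundary the
   center and the rim vertices r, r+1, ..., r' where r' is the next radius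
   endpoint after r (r' = r, i.e. the whole rim, if R = {r}).  Rim vertex v
   lies on that face iff no radius endpoint lies strictly between r and v. *)
Definition in_radii (m : nat) (R : {set 'I_m}) (k : nat) : bool :=
  [exists w in R, val w == k].

Definition wheel_face_has (m : nat) (R : {set 'I_m}) (r v : 'I_m) : bool :=
  [forall k : 'I_m, ((0 < val k) && (val k < (val v + m - val r) %% m))
                      ==> ~~ in_radii R ((val r + val k) %% m)].

(* the plane wheel-minus-radii is outerplanar: some face has all vertices
   on its boundary *)
Definition wheel_plane_outerplanar (m : nat) (R : {set 'I_m}) : Prop :=
  R = set0 \/ exists2 r, r \in R & forall v : 'I_m, wheel_face_has R r v.

Section Catalog.
Variable V : finType.
Implicit Type G : sgraph V.

(* Type 1: subdivided 3-prism *)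
Definition FC_type1 G : Prop :=
  exists x1 x2 x3 y1 y2 y3 : V, exists p1 p2 p3 : seq V,
    [/\ uniq [:: x1; x2; x3; y1; y2; y3],
        path_from_to p1 x1 y1, path_from_to p2 x2 y2, path_from_to p3 x3 y3 &
        union_of_paths G [:: [:: x1; x2]; [:: x2; x3]; [:: x3; x1];
                             [:: y1; y2]; [:: y2; y3]; [:: y3; y1]; p1; p2; p3]].

(* Type 2: K4 with the three edges c t_i each subdivided at least once *)
Definition FC_type2 G : Prop :=
  exists c t1 t2 t3 : V, exists p1 p2 p3 : seq V,
    [/\ uniq [:: c; t1; t2; t3],
        [/\ path_from_to p1 c t1, path_from_to p2 c t2, path_from_to p3 c t3 &
            [/\ 3 <= size p1, 3 <= size p2 & 3 <= size p3]] &
        union_of_paths G [:: [:: t1; t2]; [:: t2; t3]; [:: t3; t1]; p1; p2; p3]].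

Definition FC_type3 G : Prop :=
  exists a0 a1 : V, exists p1 p2 p3 : seq V,
    [/\ a0 != a1,
        [/\ path_from_to p1 a0 a1, path_from_to p2 a0 a1 & path_from_to p3 a0 a1],
        [/\ 4 <= size p1, 4 <= size p2 & 4 <= size p3] &
        union_of_paths G [:: p1; p2; p3]].

Definition FC_type4 G : Prop :=
  exists n, 4 <= n /\ exists R : {set 'I_n.-1},
    iso_to_wheel G R /\ ~ wheel_plane_outerplanar R.

(* Type 5: a cycle plus pairwise non-crossing chords on one side *)
Definition FC_type5 G : Prop :=
  exists n, 3 <= n /\ exists f : 'I_n -> V,
    [/\ bijective f,
        (forall i j : 'I_n, val j = (val i).+1 %% n -> adj G (f i) (f j)) &
        (forall a b c d : 'I_n, a < b -> b < c -> c < d ->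
           ~~ (adj G (f a) (f c) && adj G (f b) (f d)))].

Definition FC_type6 G : Prop :=
  #|V| = 1 \/ (connected G /\ outerplanar G /\ vertex_connectivity_is G 1).

Definition FC_type7 G : Prop :=
  ~ connected G /\ outerplanar G.

Definition in_FC G : Prop :=
  FC_type1 G \/ FC_type2 G \/ FC_type3 G \/ FC_type4 G \/ FC_type5 G \/
  FC_type6 G \/ FC_type7 G.

End Catalog.

From mathcomp Require Import all_boot zify.
Set Implicit Arguments. Unset Strict Implicit. Unset Printing Implicit Defensive.

(* Types 5-7 are outerplanar, and an outerplanar graph is 2-degenerate: in a
   convex drawing, the first vertex under an innermost chord has at most two
   neighbours; so greedy colouring uses three colours.  Types 1-3 are unions of
   paths meeting only at their ends: colour the branch vertices so that
   single-edge paths get distinct end colours; a path with an internal vertex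
   can be 3-coloured whatever its end colours are.  A wheel minus radii
   (type 4) with an even rim gets two alternating rim colours and a third one
   at the hub; with an odd rim, the hub colour is reused at a rim vertex whose
   radius is missing, and if no radius is missing the graph is an even wheel.
   Conversely, a 3-colouring of a wheel with odd rim would 2-colour the odd rim
   cycle, and K4 is complete. *)

Definition coloring (T : Type) (e : rel T) (k : nat) (c : T -> nat) : Prop :=
  (forall x, c x < k) /\ (forall x y, e x y -> c x != c y).

Lemma coloring_hom (T U : Type) (e : rel T) (e' : rel U) (f : T -> U) k c :
  (forall x y, e x y -> e' (f x) (f y)) -> coloring e' k c -> coloring e k (c \o f).
Proof. by move=> hom [c_lt proper]; split=> [x | x y /hom/proper //]; apply: c_lt. Qed.

Section Colorings.
Variables (V : finType) (G : sgraph V).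

Lemma colorableP k : reflect (exists c, coloring (adj G) k c) (colorableb G k).
Proof.
apply: (iffP existsP) => [[c /forallP proper] | [c [c_lt proper]]].
  exists (fun x => val (c x)); split=> [x | x y xy]; first exact: ltn_ord.
  by have /forallP/(_ y) := proper x; rewrite xy.
exists [ffun x => Ordinal (c_lt x)]; apply/forallP=> x; apply/forallP=> y.
by apply/implyP=> /proper; rewrite !ffunE.
Qed.

Lemma colorable_mono k l : k <= l -> colorableb G k -> colorableb G l.
Proof.
move=> le_kl /colorableP [c [c_lt proper]]; apply/colorableP.
by exists c; split=> // x; apply: leq_trans le_kl.
Qed.

Lemma colorable_card : colorableb G #|V|.
Proof.
apply/colorableP; exists (fun x => val (enum_rank x)); split=> [x | x y]; first exact: ltn_ord.
by apply: contraTneq => /val_inj/enum_rank_inj ->; rewrite (adj_irr G).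
Qed.

Lemma complete_not_colorable k :
  (forall x y, x != y -> adj G x y) -> k < #|V| -> ~~ colorableb G k.
Proof.
move=> complete lt_kV; apply/colorableP => -[c [c_lt proper]].
have c_inj : injective (fun x => Ordinal (c_lt x)).
  move=> x y [cxy]; apply/eqP; apply: contraT => /complete/proper.
  by rewrite cxy eqxx.
by have := leq_card _ c_inj; rewrite card_ord leqNgt lt_kV.
Qed.

Lemma chromatic_number_le k : colorableb G k -> chromatic_number G <= k.
Proof. by rewrite /chromatic_number; case: ex_minnP => m _; apply. Qed.

Lemma chromatic_number_eq k :
  colorableb G k.+1 -> ~~ colorableb G k -> chromatic_number G = k.+1.
Proof.
move=> col_k1 not_col_k; rewrite /chromatic_number; case: ex_minnP => m col_m min_m.
apply/eqP; rewrite eqn_leq min_m // ltnNge; apply: contra not_col_k => le_mk.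
exact: colorable_mono le_mk col_m.
Qed.

Definition nbhd (S : {set V}) v := [set w in S | adj G v w].

Lemma in_nbhd S u w : (w \in nbhd S u) = (w \in S) && adj G u w.
Proof. by rewrite inE. Qed.

Definition degenerate k :=
  forall S : {set V}, S != set0 -> exists2 v, v \in S & #|nbhd S v| <= k.

Lemma degenerate_colorable k : degenerate k -> colorableb G k.+1.
Proof.
move=> degG.
suff color_set n (S : {set V}) : #|S| < n -> exists c : {ffun V -> 'I_k.+1},
    {in S &, forall x y, adj G x y -> c x != c y}.
  have [c proper] := color_set _ [set: V] (ltnSn _).
  apply/existsP; exists c; apply/forallP=> x; apply/forallP=> y.
  by apply/implyP; apply: proper; rewrite in_setT.
elim: n S => // n IH S le_Sn.
have [-> | S0] := eqVneq S set0; first by exists [ffun=> ord0] => x; rewrite inE.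
have [v vS deg_v] := degG S S0.
have [c proper] : exists c : {ffun V -> 'I_k.+1},
    {in S :\ v &, forall x y, adj G x y -> c x != c y}.
  by apply: IH; rewrite (cardsD1 v S) vS in le_Sn.
have [i free_i] : exists i, i \notin c @: nbhd S v.
  have : 0 < #|~: (c @: nbhd S v)|.
    have := cardsC (c @: nbhd S v); have := leq_imset_card c (nbhd S v).
    by rewrite card_ord; lia.
  by case/card_gt0P => i; rewrite inE; exists i.
have fresh w : w \in S -> adj G v w -> i != c w.
  by move=> wS vw; apply: contraNneq free_i => ->; rewrite imset_f // inE wS.
exists [ffun u => if u == v then i else c u] => x y xS yS; rewrite !ffunE.
case: (eqVneq x v) => [-> | xv]; case: (eqVneq y v) => [-> | yv] xy.
- by rewrite (adj_irr G) in xy.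
- exact: fresh.
- by rewrite eq_sym fresh // (adj_sym G).
- by apply: proper; rewrite ?inE ?xv ?yv.
Qed.

End Colorings.

Section ConvexPosition.
Variables (V : finType) (G : sgraph V) (pos : V -> nat).
Hypothesis pos_inj : injective pos.
Hypothesis noncrossing : forall a b c d, pos a < pos b -> pos b < pos c -> pos c < pos d ->
  ~~ (adj G a c && adj G b d).

Definition gap (S : {set V}) a c := [set b in S | pos a < pos b < pos c].

Lemma in_gap S a c b : (b \in gap S a c) = (b \in S) && (pos a < pos b < pos c).
Proof. by rewrite inE. Qed.

Lemma gap_first_nbhd S a c b : b \in gap S a c -> {in gap S a c, forall w, pos b <= pos w} ->
    {subset nbhd G S b <= [pred w | pos a <= pos w <= pos c]} ->
  nbhd G S b \subset a |: [set w in nbhd G S b | pos b < pos w].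
Proof.
rewrite in_gap => /and3P [_ ab bc] b_min inside; apply/subsetP => w w_nb.
have /andP [aw wc] := inside w w_nb; move: (w_nb); rewrite in_nbhd => /andP [wS bw].
rewrite in_setU1 in_set w_nb /=; have [wb | bw'] := ltnP (pos w) (pos b); last first.
  have b_neq_w : b != w by apply: contraTneq bw => ->; rewrite (adj_irr G).
  by rewrite orbC ltn_neqAle bw' andbT (inj_eq pos_inj) b_neq_w.
apply/orP; left; apply/eqP/pos_inj/eqP; rewrite eqn_leq aw andbT leqNgt.
apply/negP => aw'; have := b_min w.
by rewrite in_gap wS aw' (ltn_trans wb bc) leqNgt wb => /(_ isT).
Qed.

Lemma gap_low_degree n S a c : pos c - pos a <= n -> gap S a c != set0 ->
    {in gap S a c, forall u, {subset nbhd G S u <= [pred w | pos a <= pos w <= pos c]}} ->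
  exists2 v, v \in S & #|nbhd G S v| <= 2.
Proof.
elim: n a c => [|n IH] a c span /set0Pn [b0 b0_gap] inside.
  by move: b0_gap; rewrite in_gap => /and3P [_ ? ?]; lia.
case: (arg_minnP pos b0_gap) => b b_gap b_min; have {}b_gap : b \in gap S a c := b_gap.
have nbhd_b := gap_first_nbhd b_gap b_min (inside b b_gap).
set U := [set w in _ | _] in nbhd_b.
case: (leqP #|U| 1) => [U_le1 | /card_gt1P [w [w' [wU w'U neq_ww']]]].
  exists b; first by move: b_gap; rewrite in_gap => /andP [].
  by apply: leq_trans (subset_leq_card nbhd_b) _; rewrite cardsU1; lia.
wlog lt_ww' : w w' wU w'U neq_ww' / pos w < pos w'.
  move=> wlog_lt; move: (neq_ww'); rewrite -(inj_eq pos_inj) neq_ltn => /orP [] lt_w.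
  - exact: (wlog_lt w w').
  - by apply: (wlog_lt w' w); rewrite // eq_sym.
(* The chord [b w'] encloses [w] and, being crossed by no edge, bounds a
   shorter closed gap. *)
move: wU w'U; rewrite !inE -!andbA => /and3P [wS _ bw] /and3P [w'S adj_bw' bw'].
have /andP [_ w'c] : pos a <= pos w' <= pos c by apply: (inside b b_gap); rewrite in_nbhd w'S.
have ab : pos a < pos b by move: b_gap; rewrite in_gap => /and3P [].
apply: (IH b w'); first lia.
  by apply/set0Pn; exists w; rewrite in_gap wS bw lt_ww'.
move=> u; rewrite in_gap => /and3P [_ bu uw'] x; rewrite in_nbhd => /andP [_ ux].
rewrite inE; apply/andP; split; rewrite leqNgt; apply/negP => lt_x.
- by have := noncrossing lt_x bu uw'; rewrite (adj_sym G) ux adj_bw'.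
- by have := noncrossing bu uw' lt_x; rewrite adj_bw' ux.
Qed.

Lemma convex_degenerate : degenerate G 2.
Proof.
move=> S /set0Pn [s sS].
case: (leqP #|S| 3) => [small | big].
  exists s => //; rewrite -ltnS (leq_trans _ small) // (cardsD1 s S) sS ltnS.
  apply: subset_leq_card; apply/subsetP => w; rewrite !inE => /andP [wS sw].
  by rewrite wS andbT; apply: contraTneq sw => ->; rewrite (adj_irr G).
case: (arg_minnP pos sS) => a aS a_min; case: (arg_maxnP pos sS) => c cS c_max.
have [b bS b_ac] : exists2 b, b \in S & b \notin [set a; c].
  apply/subsetPn; apply: contraTN big => /subset_leq_card; rewrite cards2; lia.
apply: (@gap_low_degree _ S a c (leqnn _)); last first.
  by move=> u _ w; rewrite in_nbhd inE => /andP [wS _]; rewrite (a_min w wS); apply: c_max.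
apply/set0Pn; exists b; rewrite in_gap bS.
move: b_ac; rewrite !inE negb_or -!(inj_eq pos_inj) => /andP [ba bc].
by have := a_min b bS; have := c_max b bS; lia.
Qed.

End ConvexPosition.

Lemma convex_order_colorable (V : finType) (G : sgraph V) n (f : 'I_n -> V) :
    bijective f ->
    (forall a b c d : 'I_n, a < b -> b < c -> c < d ->
       ~~ (adj G (f a) (f c) && adj G (f b) (f d))) ->
  colorableb G 3.
Proof.
case=> g fK gK noncrossing; apply/degenerate_colorable.
apply: (@convex_degenerate _ _ (fun v => val (g v))).
  by move=> u w /val_inj/(can_inj gK).
by move=> a b c d ab bc cd; have := noncrossing _ _ _ _ ab bc cd; rewrite !gK.
Qed.

Lemma outerplanar_colorable (V : finType) (G : sgraph V) : outerplanar G -> colorableb G 3.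
Proof. by case=> f [f_bij noncrossing]; exact: convex_order_colorable f_bij noncrossing. Qed.

Definition third_color a b :=
  if (a != 0) && (b != 0) then 0 else if (a != 1) && (b != 1) then 1 else 2.

Lemma third_colorP a b : [/\ third_color a b < 3, third_color a b != a & third_color a b != b].
Proof. by rewrite /third_color; do !case: ifP; split; lia. Qed.

(* Odd inner positions get a colour [t] avoiding both ends, even inner ones a
   colour avoiding [t] and [B]; so only a single edge ([L = 1]) needs [A != B]. *)
Definition path_color A B L k :=
  if k == 0 then A else if k == L then B
  else if odd k then third_color A B else third_color (third_color A B) B.

Lemma path_color_lt A B L k : A < 3 -> B < 3 -> path_color A B L k < 3.
Proof.
rewrite /path_color; case: (third_colorP A B) => ? _ _.
by case: (third_colorP (third_color A B) B) => *; do !case: ifP.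
Qed.

Lemma path_color_step A B L k :
  k < L -> (L = 1 -> A != B) -> path_color A B L k != path_color A B L k.+1.
Proof.
rewrite /path_color /= => lt_kL L1.
case: (third_colorP A B) => _ tA tB; case: (third_colorP (third_color A B) B) => _ ut uB.
case: (eqVneq k 0) => [-> | k0] /=.
  by case: (eqVneq 1 L) => [E | _]; [apply: L1 | rewrite eq_sym].
rewrite (ltn_eqF lt_kL); case: (eqVneq k.+1 L) => _; case: (odd k); rewrite //= eq_sym //.
Qed.

Definition end_colored (V : eqType) (e : V -> nat) (p : seq V) :=
  if p is x :: q then [&& uniq p, q != [::] & (size q == 1) ==> (e x != e (last x q))]
  else false.
Arguments end_colored : simpl never.

Lemma pedge_nth (V : finType) (p : seq V) x y : pedge p x y -> exists2 k, k.+1 < size p &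
  (x, y) = (nth x p k, nth x p k.+1) \/ (y, x) = (nth x p k, nth x p k.+1).
Proof.
case/hasP => z /(nthP (x, x)) [k]; rewrite size_zip size_behead => lt_k <-.
rewrite nth_zip_cond size_zip size_behead lt_k nth_behead /=.
have lt_k1 : k.+1 < size p by move: lt_k; rewrite leq_min ltn_predRL => /andP [_].
by case/orP => /eqP <-; exists k => //; [left | right].
Qed.

Section UnionOfPaths.
Variables (V : finType) (e : V -> nat).

Lemma end_coloredE x q : end_colored e (x :: q) =
  [&& uniq (x :: q), q != [::] & (size q == 1) ==> (e x != e (last x q))].
Proof. by []. Qed.

Definition path_color_of (p : seq V) v :=
  if p is x :: q then path_color (e x) (e (last x q)) (size q) (index v p) else 0.

Lemma path_color_of_nth d x q k : uniq (x :: q) -> k < size (x :: q) ->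
  path_color_of (x :: q) (nth d (x :: q) k) = path_color (e x) (e (last x q)) (size q) k.
Proof. by move=> uniq_p lt_k; rewrite -[in RHS](index_uniq d lt_k uniq_p). Qed.

Lemma end_colored_pair x y : e x != e y -> end_colored e [:: x; y].
Proof. by move=> exy; rewrite end_coloredE /= inE exy !andbT; apply: contraNneq exy => ->. Qed.

Lemma end_colored_path p x y :
  path_from_to p x y -> (size p = 2 -> e x != e y) -> end_colored e p.
Proof.
case: p => [|x' [|z q]] [uniq_p //= _ <- <-] exy.
rewrite end_coloredE uniq_p /=.
by apply/implyP => /eqP [sz]; apply: exy; rewrite sz.
Qed.

Variables (G : sgraph V) (ps : seq (seq V)).
Hypothesis G_union : union_of_paths G ps.
Hypothesis e_lt3 : forall v, e v < 3.
Hypothesis ps_end_colored : all (end_colored e) ps.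

Lemma paths_meet_at_ends p q x :
  p \in ps -> q \in ps -> p != q -> x \in p -> x \in q -> is_end p x.
Proof.
case: G_union => _ _ meet /(nthP [::]) [i lt_i <-] /(nthP [::]) [j lt_j <-] neq_pq.
have : i != j by apply: contraNneq neq_pq => ->.
case: ltngtP => // [ij | ji] _ xi xj.
- by case/andP: (meet i j ij lt_j x xi xj).
- by case/andP: (meet j i ji lt_i x xj xi).
Qed.

Definition interior (p : seq V) v := (v \in p) && ~~ is_end p v.

Lemma interior_unique p q v : p \in ps -> q \in ps -> interior p v -> v \in q -> q = p.
Proof.
move=> pps qps /andP [vp vNend] vq; apply/eqP; apply: contraNT vNend => neq_qp.
by apply: (paths_meet_at_ends pps qps) => //; rewrite eq_sym.
Qed.

Definition paths_coloring v :=
  if [seq p <- ps | interior p v] is p :: _ then path_color_of p v else e v.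

Lemma path_color_of_end p v : end_colored e p -> is_end p v -> path_color_of p v = e v.
Proof.
case: p => [// | x q]; rewrite end_coloredE => /and3P [uniq_p q0 _] v_end.
rewrite /is_end /= in v_end.
case/orP: v_end => /eqP ->; rewrite /path_color_of; first by rewrite /= eqxx.
by rewrite index_last // /path_color size_eq0 (negbTE q0) eqxx.
Qed.

Lemma paths_coloringE p v : p \in ps -> v \in p -> paths_coloring v = path_color_of p v.
Proof.
move=> pps vp; rewrite /paths_coloring.
case E : [seq q <- ps | interior q v] => [| q r].
  apply/esym/path_color_of_end; first exact: (allP ps_end_colored).
  apply: contraT => vNend; suff : p \in [seq q <- ps | interior q v] by rewrite E.
  by rewrite mem_filter /interior vp vNend.
have : q \in [seq q <- ps | interior q v] by rewrite E mem_head.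
by rewrite mem_filter => /andP [vq qps]; rewrite (interior_unique qps pps vq vp).
Qed.

Lemma union_of_paths_colorable : colorableb G 3.
Proof.
apply/colorableP; exists paths_coloring; split=> [v | x y].
  rewrite /paths_coloring; case: [seq _ <- _ | _] => [| [| z q] _] //.
  exact: path_color_lt.
case: G_union => -> _ _ /hasP [p pps /pedge_nth [k lt_k xy]].
suff : paths_coloring (nth x p k) != paths_coloring (nth x p k.+1).
  by case: xy => -[<- <-] //; rewrite eq_sym.
rewrite (paths_coloringE pps (mem_nth x (ltnW lt_k))) (paths_coloringE pps (mem_nth x lt_k)).
have := allP ps_end_colored p pps; case: p {pps xy} lt_k => [// | z q] lt_k.
rewrite end_coloredE => /and3P [uniq_p _ sz1]; rewrite !path_color_of_nth // 1?ltnW //.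
apply: path_color_step => [| sz]; first by rewrite ltnS in lt_k.
by move/implyP: sz1; apply; rewrite sz.
Qed.

End UnionOfPaths.

Section Wheels.
Variable m : nat.

Definition wheel_color (rim : nat -> nat) (hub : nat) (o : option 'I_m) : nat :=
  if o is Some i then rim i else hub.

Lemma rim_succ (i j : 'I_m) : val j == (val i).+1 %% m ->
  (val i).+1 < m /\ val j = (val i).+1 \/ (val i).+1 = m /\ val j = 0.
Proof.
move/eqP ->; case: (ltngtP (val i).+1 m) => [lt_im | | eq_im].
- by left; rewrite modn_small.
- by rewrite ltnS leqNgt ltn_ord.
- by right; rewrite eq_im modnn.
Qed.

Lemma wheel_coloring (R : {set 'I_m}) k rim hub :
    (forall i, i < m -> rim i < k) -> hub < k ->
    (forall i, i.+1 < m -> rim i != rim i.+1) -> rim m.-1 != rim 0 ->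
    (forall i : 'I_m, i \in R -> rim i != hub) ->
  coloring (wheel_adj R) k (wheel_color rim hub).
Proof.
move=> rim_lt hub_lt rim_step rim_last rim_hub.
have rim_ne (i j : 'I_m) : val j == (val i).+1 %% m -> rim i != rim j.
  case/rim_succ => -[im ->]; first exact: rim_step.
  by move: rim_last; move/(congr1 predn): im => /= <-.
split=> [[i |] // | [i |] [j |] //=]; first exact: rim_lt.
- by case/orP => /rim_ne //; rewrite eq_sym.
- exact: rim_hub.
- by move/rim_hub; rewrite eq_sym.
Qed.

(* Rim vertex [r] takes colour 2; shifting the parity past [r] lets the 0/1
   alternation close up around an odd rim. *)
Definition pivot_rim r i := if i == r then 2 else (if i < r then i else i.+1) %% 2.

Lemma pivot_rim_lt r i : pivot_rim r i < 3.
Proof. by rewrite /pivot_rim; case: ifP => // _; rewrite ltnS ltnW // ltn_pmod. Qed.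

Hypotheses (odd_m : odd m) (m_gt1 : 1 < m).

Lemma pivot_rim_coloring (R : {set 'I_m}) r k hub : r < m -> 2 < k -> hub < k ->
    (forall i : 'I_m, i \in R -> pivot_rim r i != hub) ->
  coloring (wheel_adj R) k (wheel_color (pivot_rim r) hub).
Proof.
move=> lt_rm k_gt2 hub_lt rim_hub; apply: wheel_coloring => //.
- by move=> i _; apply: leq_trans (pivot_rim_lt r i) _.
- by move=> i lt_im; rewrite /pivot_rim; do !case: ifP; lia.
- by rewrite /pivot_rim; do !case: ifP; lia.
Qed.

Lemma odd_rim_wheel_not_colorable c : ~ coloring (wheel_adj [set: 'I_m]) 3 c.
Proof.
case: m odd_m m_gt1 c => [// | n] /= even_n n_gt0 c [c_lt proper].
pose d k := c (Some (inord k)).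
have d_lt k : d k < 3 := c_lt _.
have hub_ne k : d k != c None by apply: proper; rewrite /= in_setT.
have step k : k < n -> d k != d k.+1.
  move=> lt_kn; apply: proper => /=; apply/orP; left.
  by rewrite !inordK ?modn_small //; lia.
(* The rim avoids the hub colour, so it alternates between the two others;
   [3 - c None - d 0] is the second one. *)
have alt k : k <= n -> d k = if odd k then 3 - c None - d 0 else d 0.
  elim: k => [// | k IH] lt_kn.
  move: (IH (ltnW lt_kn)) (step k lt_kn) (hub_ne 0) (hub_ne k) (hub_ne k.+1).
  move: (c_lt None) (d_lt 0) (d_lt k) (d_lt k.+1) => /=; case: (odd k) => /=; lia.
have : d n != d 0 by apply: proper; rewrite /= !inordK ?modnn ?eqxx.
by rewrite alt // (negbTE even_n) eqxx.
Qed.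

End Wheels.

Section Catalog.
Variables (V : finType) (G : sgraph V).

Lemma iso_to_wheel_colorable m (R : {set 'I_m}) k : iso_to_wheel G R ->
  colorableb G k <-> exists c, coloring (wheel_adj R) k c.
Proof.
case=> f [[g fK gK] adjE]; rewrite -(rwP (colorableP G k)); split=> -[c col].
  by exists (c \o g); apply: coloring_hom col => o o'; rewrite adjE !gK.
by exists (c \o f); apply: coloring_hom col => x y; rewrite adjE.
Qed.

Lemma FC_type1_colorable : FC_type1 G -> colorableb G 3.
Proof.
case=> [x1 [x2 [x3 [y1 [y2 [y3 [p1 [p2 [p3 [uniq_xy P1 P2 P3 union]]]]]]]]]].
pose branch := [:: x1; x2; x3; y1; y2; y3]; pose colors := [:: 0; 1; 2; 1; 2; 0].
pose e v := nth 0 colors (index v branch).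
have eE i : i < 6 -> e (nth x1 branch i) = nth 0 colors i.
  by move=> lt_i6; rewrite /e index_uniq.
apply: (union_of_paths_colorable (e := e) union).
  move=> v; rewrite /e; case: (index v branch) => [| [| [| [| [| [| n]]]]]] //=.
  by rewrite nth_nil.
rewrite /= !end_colored_pair ?(end_colored_path P1) ?(end_colored_path P2)
  ?(end_colored_path P3) //=;
  by rewrite ?(eE 0) ?(eE 1) ?(eE 2) ?(eE 3) ?(eE 4) ?(eE 5).
Qed.

Lemma FC_type2_colorable : FC_type2 G -> colorableb G 3.
Proof.
case=> [c [t1 [t2 [t3 [p1 [p2 [p3 [/andP [_ uniq_t] [P1 P2 P3 [s1 s2 s3]] union]]]]]]]].
pose e v := index v [:: t1; t2; t3] %% 3.
have eE i : i < 3 -> e (nth t1 [:: t1; t2; t3] i) = i.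
  by move=> lt_i3; rewrite /e index_uniq ?modn_small.
have long p x y : 3 <= size p -> path_from_to p x y -> end_colored e p.
  by move=> p_long /end_colored_path; apply=> sz; rewrite sz in p_long.
apply: (union_of_paths_colorable (e := e) union) => [v | ]; first by rewrite ltn_pmod.
rewrite /= !end_colored_pair ?(long _ _ _ s1 P1) ?(long _ _ _ s2 P2) ?(long _ _ _ s3 P3) //;
  by rewrite ?(eE 0) ?(eE 1) ?(eE 2).
Qed.

Lemma FC_type3_colorable : FC_type3 G -> colorableb G 3.
Proof.
case=> [a0 [a1 [p1 [p2 [p3 [_ [P1 P2 P3] [s1 s2 s3] union]]]]]].
pose e (v : V) := 0.
have long p : 4 <= size p -> path_from_to p a0 a1 -> end_colored e p.
  by move=> p_long /end_colored_path; apply=> sz; rewrite sz in p_long.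
apply: (union_of_paths_colorable (e := e) union) => //.
by rewrite /= (long _ s1 P1) (long _ s2 P2) (long _ s3 P3).
Qed.

Lemma FC_type4_colorable :
  FC_type4 G -> ~ (exists n, is_wheel G n /\ ~~ odd n) -> colorableb G 3.
Proof.
case=> n [n4 [R [iso _]]] no_even_wheel; apply/(iso_to_wheel_colorable 3 iso).
have m_gt1 : 1 < n.-1 by lia.
have [odd_m | even_m] := boolP (odd n.-1); last first.
  by exists (wheel_color (modn^~ 2) 2); apply: wheel_coloring => // *; lia.
case: (pickP (fun r => r \notin R)) => [r rNR | all_radii].
  exists (wheel_color (pivot_rim r) 2).
  apply: (pivot_rim_coloring odd_m m_gt1 (ltn_ord r)) => // i iR.
  rewrite /pivot_rim ifN; first by rewrite neq_ltn ltn_pmod.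
  by apply: contraNneq rNR => /ord_inj <-.
exfalso; apply: no_even_wheel; exists n; split; last lia.
split=> //; suff <- : R = setT by [].
by apply/setP => r; rewrite in_setT; apply: negbFE (all_radii r).
Qed.

Lemma K4_chromatic_number : is_K4 G -> chromatic_number G = 4.
Proof.
case=> card4 complete; apply: chromatic_number_eq; first by rewrite -card4 colorable_card.
by apply: complete_not_colorable => //; rewrite card4.
Qed.

Lemma even_wheel_chromatic_number n : is_wheel G n -> ~~ odd n -> chromatic_number G = 4.
Proof.
case=> n4 iso even_n; have odd_m : odd n.-1 by lia.
have m_gt1 : 1 < n.-1 by lia.
apply: chromatic_number_eq.
  apply/(iso_to_wheel_colorable 4 iso); exists (wheel_color (pivot_rim 0) 3).
  apply: (pivot_rim_coloring odd_m m_gt1 (ltnW m_gt1)) => // i _.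
  by rewrite neq_ltn pivot_rim_lt.
apply/negP => /(iso_to_wheel_colorable 3 iso) -[c].
exact: odd_rim_wheel_not_colorable.
Qed.

End Catalog.

Theorem proposition1 (V : finType) (G : sgraph V) :
  (in_FC G ->
     ~ is_K4 G -> ~ (exists n, is_wheel G n /\ ~~ odd n) ->
     chromatic_number G <= 3) /\
  (is_K4 G \/ (exists n, is_wheel G n /\ ~~ odd n) ->
     chromatic_number G = 4).
Proof.
split=> [FC _ no_even_wheel | [K4 | [n [wheel even_n]]]]; last 2 first.
- exact: K4_chromatic_number.
- exact: even_wheel_chromatic_number wheel even_n.
apply: chromatic_number_le.
case: FC => [T1 | [T2 | [T3 | [T4 | [[n [_ [f [f_bij _ noncrossing]]]] | [T6 | [_ outer]]]]]]].
- exact: FC_type1_colorable.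
- exact: FC_type2_colorable.
- exact: FC_type3_colorable.
- exact: FC_type4_colorable.
- exact: convex_order_colorable f_bij noncrossing.
- case: T6 => [card1 | [_ [outer _]]]; last exact: outerplanar_colorable.
  by apply: colorable_mono (colorable_card G); rewrite card1.
- exact: outerplanar_colorable.
Qed.
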